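(* Let $t_0>0$, $D\ge0$, $\alpha_1,\alpha_2\in\mathbb{R}$ and $i\in\mathbb{Z}^+$ with $\alpha_1\le\alpha_2-1$ and $\alpha_2-\alpha_1\le i$. Let $F:\{-1,\dots,i\}\times[\alpha_1-1,\alpha_2]\times[t_0,\infty)\to[0,\infty)$ be such that $F(j,\alpha,t)$ is Lebesgue measurable in $t$ for each $\alpha,j$. Let $\gamma\ge0$. Assume: (1) (monotonicity) for all $j,j_1,j_2\in\{-1,\dots,i\}$ with $j_1\le j_2$, all $\beta,\beta_1,\beta_2\in[\alpha_1,\alpha_2]$ with $\beta_1\le\beta_2$, and all $t\ge t_0$: $F(j_1,\beta,t)\lesssim F(j_2,\beta,t)$ and $F(j,\beta_1,t)\lesssim F(j,\beta_2,t)$; (2) (interpolation) for all $j\in\{-1,\dots,i\}$, all $\alpha,\beta_1,\beta_2\in[\alpha_1,\alpha_2]$ with $\beta_1\le\alpha\le\beta_2$, and all $t\ge t_0$: $F(j,\alpha,t)\lesssim F(j,\beta_1,t)^{\frac{\beta_2-\alpha}{\beta_2-\beta_1}}F(j,\beta_2,t)^{\frac{\alpha-\beta_1}{\beta_2-\beta_1}}$; (3) (energy and Morawetz estimate) for all $j\in\{0,\dots,i\}$, $\alpha\in[\alpha_1,\alpha_2]$ and $t_2\ge t_1\ge t_0$: $F(j,\alpha,t_2)+\int_{t_1}^{t_2}F(j-1,\alpha-1,t)\,dt\lesssim F(j,\alpha,t_1)+Dt_1^{\alpha-\alpha_2-\gamma}$; (4) (initial decay rate) if $\gamma>0$, then for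 all $t\ge t_0$: $F(i,\alpha_2,t)\lesssim t^{-\gamma}(F(i,\alpha_2,t_0)+D)$. Then for all $j\in\{0,\dots,i\}$, all $\alpha\in[\max\{\alpha_1,\alpha_2-j\},\alpha_2]$ and all $t\ge t_0$, $$F(i-j,\alpha,t)\lesssim t^{\alpha-\alpha_2-\gamma}(F(i,\alpha_2,t_0)+D),$$ where the implicit constant may depend on $\alpha_1$ and $\alpha_2$.
   Context: $A\lesssim B$ means $A\le CB$ for a constant $C$ independent of $t,t_1,t_2$ and $D$. In the paper $t_0=10M>0$. *)

From HB Require Import structures.
From mathcomp Require Import all_boot all_order all_algebra.
From mathcomp Require Import all_classical all_reals all_analysis.
Set Implicit Arguments.
Unset Strict Implicit.
Unset Printing Implicit Defensive.

From HB Require Import structures.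
From mathcomp Require Import all_boot all_order all_algebra.
From mathcomp Require Import all_classical all_reals all_analysis.
From mathcomp Require Import measurable_realfun zify ring lra.
Set Implicit Arguments.
Unset Strict Implicit.
Unset Printing Implicit Defensive.

(* Induction on the depth j, with constants depending only on t0, al1, al2, g
   and C; write X = F(i, al2, t0) + D and e = a - al2 - g.  At depth 0 the bound
   C t^(-g) X is (4), or (3) with t1 = t0 when g = 0.  To go one level down at a
   weight a <= al2 - 1, apply (3) at weight a + 1 on [t/2, t]: by induction its
   Morawetz integral is O(t^(e+1) X), so F(i-j-1, a, s) = O(t^e X) at some time
   s in [t/2, t], and the energy part of (3) carries this bound from s to t,
   losing only the factor 2^(al2-al1+g) >= s^e / t^e.  For t <= 2 t0 one starts
   instead from t0, comparing F(i-j-1, a, t0) with F(i-j, a+1, t0) by (1).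
   Weights in [al2 - 1, al2] are reached by interpolating (2) between al2 - 1
   and al2, where al2 is bounded through (1) by the level above. *)

Import Order.TTheory GRing.Theory Num.Theory.
Local Open Scope classical_set_scope.
Local Open Scope ring_scope.

Lemma exists_le_of_integral_le (R : realType) (f : R -> R) (u t B M : R) :
  u < t -> 0 <= M -> measurable_fun `[u, t] f ->
  (forall s, u <= s <= t -> 0 <= f s) ->
  (\int[lebesgue_measure]_(s in `[u, t]) (f s)%:E <= B%:E)%E ->
  B < M * (t - u) -> exists2 s, u <= s <= t & f s <= M.
Proof.
move=> ut M_ge0 f_meas f_ge0 int_le_B B_lt; apply: contrapT => no_s.
have M_le_f s : u <= s <= t -> M <= f s.
  by move=> s_ut; rewrite leNgt; apply/negP => /ltW fM; apply: no_s; exists s.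
have : (\int[lebesgue_measure]_(s in `[u, t]) (cst M%:E) s
        <= \int[lebesgue_measure]_(s in `[u, t]) (f s)%:E)%E.
  apply: ge0_le_integral.
  - exact: measurable_itv.
  - by move=> s _; rewrite lee_fin.
  - exact: measurable_cst.
  - by apply/measurable_EFinP.
  - by move=> s /=; rewrite in_itv /= lee_fin; apply: M_le_f.
rewrite integral_cst //= lebesgue_measure_itv /= lte_fin ut -EFinB -EFinM.
move=> /le_trans /(_ int_le_B); rewrite lee_fin => MB.
by have := lt_le_trans B_lt MB; rewrite ltxx.
Qed.

Lemma powR_le_of_le_double (R : realType) (x y c r : R) :
  0 < x -> x <= y -> y <= 2 * x -> -c <= r <= 0 -> x `^ r <= 2 `^ c * y `^ r.
Proof.
move=> x_gt0 xy y2x /andP[cr r_le0].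
have y_gt0 : 0 < y by apply: lt_le_trans xy.
have y_le : y `^ (- r) <= 2 `^ c * x `^ (- r).
  apply: le_trans (_ : (2 * x) `^ (- r) <= _).
    by apply: ge0_ler_powR; rewrite ?nnegrE; lra.
  rewrite powRM ?(ltW x_gt0) // ler_wpM2r ?powR_ge0 // ler_powR //; lra.
have powR_inv z : z `^ r = (z `^ (- r))^-1 by rewrite -powRN opprK.
rewrite !powR_inv ler_pdivlMr ?powR_gt0 //.
by rewrite mulrC ler_pdivrMr ?powR_gt0.
Qed.

Lemma powR_interp_le (R : realType) (A t r1 r2 th1 th2 f1 f2 : R) :
  0 < t -> 0 <= th1 -> 0 <= th2 -> th1 + th2 = 1 ->
  0 <= f1 <= A * t `^ r1 -> 0 <= f2 <= A * t `^ r2 ->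
  f1 `^ th1 * f2 `^ th2 <= A * t `^ (r1 * th1 + r2 * th2).
Proof.
move=> t_gt0 th1_ge0 th2_ge0 th12 /andP[f1_ge0 f1_le] /andP[f2_ge0 f2_le].
have A_ge0 : 0 <= A.
  by rewrite -(pmulr_lge0 _ (@powR_gt0 _ t r1 t_gt0)) (le_trans f1_ge0).
have pow_le f r th : 0 <= th -> 0 <= f -> f <= A * t `^ r ->
    f `^ th <= A `^ th * t `^ (r * th).
  move=> th_ge0 f_ge0 f_le; rewrite powRrM -powRM ?powR_ge0 //.
  by apply: ge0_ler_powR; rewrite ?nnegrE ?mulr_ge0 ?powR_ge0.
apply: le_trans (ler_pM (powR_ge0 _ _) (powR_ge0 _ _)
  (pow_le _ _ _ th1_ge0 f1_ge0 f1_le) (pow_le _ _ _ th2_ge0 f2_ge0 f2_le)) _.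
by rewrite mulrACA -!powRD ?th12 ?powRr1 // ?oner_eq0 // (gt_eqF t_gt0) implybT.
Qed.

Lemma int_between_pred (n j : int) : 0 <= j <= n -> -1 <= j - 1 <= n.
Proof. lia. Qed.

Lemma int_between_widen (n j : int) : 0 <= j <= n -> -1 <= j <= n.
Proof. lia. Qed.

Lemma int_between_predS (n j : int) : 0 < j <= n -> 0 <= j - 1 <= n.
Proof. lia. Qed.

Lemma int_subn_between (n j : nat) : (j < n)%N -> 0 < n%:Z - j%:Z <= n%:Z.
Proof. lia. Qed.

Section Decay.
Variables (R : realType) (t0 al1 al2 g C : R).
Hypotheses (t0_gt0 : 0 < t0) (C_gt0 : 0 < C).

(* [P] bounds [s `^ e / t `^ e] for [s <= t <= 2 * s] and every exponent
   [e = a - al2 - g] with [al1 <= a <= al2]. *)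
Let P := 2 `^ (al2 - al1 + g).

Definition early_const (k : R) : R := C * (C * C * k * t0 * P + P).
Definition late_const (k : R) : R := C * (C * (k + 1) * P + P).
Definition step_const (k : R) : R := early_const k + late_const k.

Definition interp_const (k : R) : R := C * (step_const k + C * k).

Fixpoint decay_const (j : nat) : R :=
  if j is j'.+1 then
    let k := decay_const j' in k + step_const k + interp_const k
  else C.

Lemma early_const_ge0 (k : R) : 0 <= k -> 0 <= early_const k.
Proof.
move=> k_ge0; rewrite /early_const.
by rewrite !(addr_ge0, mulr_ge0) ?(ltW C_gt0) ?(ltW t0_gt0) ?powR_ge0.
Qed.

Lemma late_const_ge0 (k : R) : 0 <= k -> 0 <= late_const k.
Proof.
move=> k_ge0; rewrite /late_const.
by rewrite !(addr_ge0, mulr_ge0) ?(ltW C_gt0) ?powR_ge0.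
Qed.

Lemma step_const_ge0 (k : R) : 0 <= k -> 0 <= step_const k.
Proof. by move=> k_ge0; rewrite addr_ge0 ?early_const_ge0 ?late_const_ge0. Qed.

Lemma interp_const_ge0 (k : R) : 0 <= k -> 0 <= interp_const k.
Proof.
move=> k_ge0; have C_ge0 := ltW C_gt0.
by rewrite mulr_ge0 // addr_ge0 ?step_const_ge0 ?mulr_ge0.
Qed.

Lemma decay_const_ge0 (j : nat) : 0 <= decay_const j.
Proof.
elim: j => [|j IH] /=; first exact: ltW.
by rewrite addr_ge0 ?interp_const_ge0 // addr_ge0 ?step_const_ge0.
Qed.

Lemma decay_const_le (j j' : nat) : (j <= j')%N -> decay_const j <= decay_const j'.
Proof.
move=> /subnK <-; elim: (j' - j)%N => [|n IH] //=.
apply: le_trans IH _; have k_ge0 := decay_const_ge0 (n + j).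
by rewrite -addrA lerDl addr_ge0 ?step_const_ge0 ?interp_const_ge0.
Qed.

Variables (i : nat) (D : R) (F : int -> R -> R -> R).

Definition nonneg_on_range := forall (j : int) (a t : R), -1 <= j <= i%:Z ->
  al1 - 1 <= a <= al2 -> t0 <= t -> 0 <= F j a t.

Definition measurable_on_range := forall (j : int) (a : R), -1 <= j <= i%:Z ->
  al1 - 1 <= a <= al2 -> measurable_fun `[t0, +oo[ (F j a).

Definition level_monotone := forall (j1 j2 : int) (b t : R), -1 <= j1 ->
  j1 <= j2 -> j2 <= i%:Z -> al1 <= b <= al2 -> t0 <= t -> F j1 b t <= C * F j2 b t.

Definition weight_monotone := forall (j : int) (b1 b2 t : R), -1 <= j <= i%:Z ->
  al1 <= b1 -> b1 <= b2 -> b2 <= al2 -> t0 <= t -> F j b1 t <= C * F j b2 t.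

Definition weight_interpolation := forall (j : int) (a b1 b2 t : R),
  -1 <= j <= i%:Z -> al1 <= b1 -> b1 <= a -> a <= b2 -> b2 <= al2 -> b1 < b2 ->
  t0 <= t -> F j a t <= C * (F j b1 t `^ ((b2 - a) / (b2 - b1))
                             * F j b2 t `^ ((a - b1) / (b2 - b1))).

Definition energy_morawetz := forall (j : int) (a t1 t2 : R), 0 <= j <= i%:Z ->
  al1 <= a <= al2 -> t0 <= t1 -> t1 <= t2 ->
  ((F j a t2)%:E
   + \int[lebesgue_measure]_(t in `[t1, t2]) (F (j - 1) (a - 1) t)%:E
   <= (C * (F j a t1 + D * t1 `^ (a - al2 - g)))%:E)%E.

Definition initial_decay := 0 < g -> forall t : R, t0 <= t ->
  F i%:Z al2 t <= C * (t `^ (- g) * (F i%:Z al2 t0 + D)).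

Hypotheses (al12 : al1 <= al2 - 1) (g_ge0 : 0 <= g) (D_ge0 : 0 <= D).
Hypotheses (F_ge0 : nonneg_on_range) (F_meas : measurable_on_range).
Hypotheses (F_level : level_monotone) (F_weight : weight_monotone).
Hypotheses (F_interp : weight_interpolation) (F_energy : energy_morawetz).
Hypothesis F_decay : initial_decay.

Let X := F i%:Z al2 t0 + D.

Let i_range : 0 <= i%:Z <= i%:Z.
Proof. by rewrite lexx andbT. Qed.

Let al2_range : al1 <= al2 <= al2.
Proof. by rewrite lexx andbT; move: al12; lra. Qed.

Let F_top_ge0 : 0 <= F i%:Z al2 t0.
Proof.
apply: F_ge0 (lexx t0); first exact: int_between_widen.
by rewrite lexx andbT; move: al12; lra.
Qed.

Let D_le_X : D <= X.
Proof. by rewrite /X lerDr. Qed.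

Let X_ge0 : 0 <= X.
Proof. exact: le_trans D_ge0 D_le_X. Qed.

Lemma energy_estimate (j : int) (a t1 t2 : R) : 0 <= j <= i%:Z ->
  al1 <= a <= al2 -> t0 <= t1 -> t1 <= t2 ->
  F j a t2 <= C * (F j a t1 + D * t1 `^ (a - al2 - g)).
Proof.
move=> j_i a_al t0t1 t1t2; rewrite -lee_fin.
apply: le_trans (F_energy j_i a_al t0t1 t1t2); apply: leeDl.
apply: integral_ge0 => s; rewrite /= in_itv /= => /andP[t1s _].
move: a_al => /andP[al1a aal2].
by rewrite lee_fin F_ge0 //; [exact: int_between_pred | apply/andP; split; lra | lra].
Qed.

Lemma morawetz_estimate (j : int) (a t1 t2 : R) : 0 <= j <= i%:Z ->
  al1 <= a <= al2 -> t0 <= t1 -> t1 <= t2 ->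
  (\int[lebesgue_measure]_(t in `[t1, t2]) (F (j - 1) (a - 1) t)%:E
   <= (C * (F j a t1 + D * t1 `^ (a - al2 - g)))%:E)%E.
Proof.
move=> j_i a_al t0t1 t1t2.
apply: le_trans (F_energy j_i a_al t0t1 t1t2); apply: leeDr.
move: a_al => /andP[al1a aal2].
by rewrite lee_fin F_ge0 //; [exact: int_between_widen | apply/andP; split; lra | lra].
Qed.

Definition decay_bound (k : R) (j : int) (a : R) :=
  forall t, t0 <= t -> F j a t <= k * (t `^ (a - al2 - g) * X).

Lemma decay_bound_le (k k' : R) (j : int) (a : R) :
  k <= k' -> decay_bound k j a -> decay_bound k' j a.
Proof.
move=> kk' bound t t0t; apply: le_trans (bound t t0t) _.
by rewrite ler_wpM2r // mulr_ge0 ?powR_ge0.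
Qed.

Lemma decay_top : decay_bound C i%:Z al2.
Proof.
move=> t t0t; rewrite subrr sub0r.
have [g_gt0 | g_le0] := ltP 0 g; first exact: F_decay.
have g0 : g = 0 by move: g_ge0; lra.
have := energy_estimate i_range al2_range (lexx t0) t0t.
by rewrite subrr sub0r g0 oppr0 !powRr0 mulr1 mul1r.
Qed.

Lemma level_monotone_pred (j : int) (b t : R) : 0 <= j <= i%:Z ->
  al1 <= b <= al2 -> t0 <= t -> F (j - 1) b t <= C * F j b t.
Proof.
move=> j_i b_al t0t; have /andP[j_pred _] := int_between_pred j_i.
by move: j_i => /andP[j_ge0 j_le]; apply: F_level; rewrite ?gerBl.
Qed.

Lemma decay_lower_level (k : R) (j : int) (a : R) : 0 <= j <= i%:Z ->
  al1 <= a <= al2 -> decay_bound k j a -> decay_bound (C * k) (j - 1) a.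
Proof.
move=> j_i a_al bound t t0t; rewrite -mulrA.
exact: le_trans (level_monotone_pred j_i a_al t0t) (ler_wpM2l (ltW C_gt0) (bound t t0t)).
Qed.

Lemma energy_transport (K eps : R) (j : int) (a s t : R) : 0 <= j <= i%:Z ->
  al1 <= a <= al2 -> t0 <= s -> s <= t -> t <= 2 * s ->
  F j a s <= K * (t `^ (a - al2 - g) * X) + eps ->
  F j a t <= C * (K + P) * (t `^ (a - al2 - g) * X) + C * eps.
Proof.
move=> j_i a_al t0s st t2s Fs.
have s_pow : s `^ (a - al2 - g) <= P * t `^ (a - al2 - g).
  apply: powR_le_of_le_double; [exact: lt_le_trans t0s | by [] | by [] |].
  by move: a_al g_ge0 => /andP[al1a aal2] ?; apply/andP; split; lra.
have DX := ler_pM D_ge0 (powR_ge0 _ _) D_le_X s_pow.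
apply: le_trans (energy_estimate j_i a_al t0s st) _.
rewrite -mulrA -mulrDr ler_wpM2l ?(ltW C_gt0) //; lra.
Qed.

Lemma decay_early (k : R) (j : int) (a : R) : 0 <= k -> 0 < j <= i%:Z ->
  al1 <= a -> a + 1 <= al2 -> decay_bound k j (a + 1) ->
  forall t, t0 <= t -> t <= 2 * t0 ->
  F (j - 1) a t <= early_const k * (t `^ (a - al2 - g) * X).
Proof.
move=> k_ge0 j_i al1a a1al2 bound t t0t t2t0.
have a_al : al1 <= a <= al2 by apply/andP; split; lra.
have j_i' : 0 <= j <= i%:Z by move: j_i => /andP[/ltW -> ->].
have t0_pow : t0 `^ (a - al2 - g) <= P * t `^ (a - al2 - g).
  apply: powR_le_of_le_double => //.
  by move: g_ge0 => ?; apply/andP; split; lra.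
have F_t0 : F j (a + 1) t0 <= k * (t0 * (P * (t `^ (a - al2 - g) * X))).
  apply: le_trans (bound t0 (lexx t0)) _.
  rewrite (_ : a + 1 - al2 - g = a - al2 - g + 1); last by ring.
  rewrite powRD ?powRr1 ?(ltW t0_gt0) ?(gt_eqF t0_gt0) ?implybT // -!mulrA.
  rewrite ler_wpM2l //.
  have := ler_wpM2r (mulr_ge0 (ltW t0_gt0) X_ge0) t0_pow; lra.
have := @energy_transport (C * C * k * t0 * P) 0 (j - 1) a t0 t.
rewrite mulr0 !addr0; apply => //; first exact: int_between_predS.
apply: le_trans (level_monotone_pred j_i' a_al (lexx t0)) _.
rewrite -!mulrA ler_wpM2l ?(ltW C_gt0) //.
have a_a1 : a <= a + 1 by lra.
apply: le_trans (F_weight (int_between_widen j_i') al1a a_a1 a1al2 (lexx t0)) _.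
by rewrite ler_wpM2l ?(ltW C_gt0).
Qed.

Lemma morawetz_exists_small (k eps : R) (j : int) (a u : R) : 0 <= k ->
  0 < j <= i%:Z -> al1 <= a -> a + 1 <= al2 -> decay_bound k j (a + 1) ->
  t0 <= u -> 0 < eps ->
  exists2 s, u <= s <= 2 * u &
    F (j - 1) a s <= C * (k + 1) * (u `^ (a - al2 - g) * X) + eps.
Proof.
move=> k_ge0 j_i al1a a1al2 bound t0u eps_gt0.
have u_gt0 : 0 < u := lt_le_trans t0_gt0 t0u.
have u_lt : u < 2 * u by lra.
have j_i' : 0 <= j <= i%:Z by move: j_i => /andP[/ltW -> ->].
have a1_al : al1 <= a + 1 <= al2 by apply/andP; split; lra.
have u_pow : u `^ (a + 1 - al2 - g) = u `^ (a - al2 - g) * u.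
  rewrite (_ : a + 1 - al2 - g = a - al2 - g + 1); last by ring.
  by rewrite powRD ?powRr1 ?(ltW u_gt0) ?(gt_eqF u_gt0) ?implybT.
have integral_le :
    (\int[lebesgue_measure]_(s in `[u, (2 * u)%R]) (F (j - 1) a s)%:E
     <= (C * (k + 1) * (u `^ (a - al2 - g) * X) * (2 * u - u))%:E)%E.
  have := morawetz_estimate j_i' a1_al t0u (ltW u_lt); rewrite addrK.
  move=> /le_trans; apply; rewrite lee_fin u_pow.
  have := bound u t0u; rewrite u_pow => Fu.
  have DX := ler_wpM2r (mulr_ge0 (powR_ge0 u (a - al2 - g)) (ltW u_gt0)) D_le_X.
  rewrite (_ : 2 * u - u = u); last by ring.
  rewrite -!mulrA ler_wpM2l ?(ltW C_gt0) //; lra.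
pose M := C * (k + 1) * (u `^ (a - al2 - g) * X) + eps.
apply: (exists_le_of_integral_le (M := M)) integral_le _ => //.
- by rewrite /M addr_ge0 ?mulr_ge0 ?powR_ge0 ?(ltW C_gt0) ?addr_ge0 ?(ltW eps_gt0).
- apply: (measurable_funS _ _ (F_meas _ _)).
  + exact: measurable_itv.
  + by move=> s /=; rewrite !in_itv /= andbT => /andP[us _]; apply: le_trans us.
  + exact: int_between_pred.
  + by apply/andP; split; lra.
- move=> s /andP[us _]; apply: F_ge0; first exact: int_between_pred.
  + by apply/andP; split; lra.
  + exact: le_trans us.
- by rewrite ltr_pM2r ?subr_gt0 // /M ltrDl.
Qed.

Lemma decay_late (k : R) (j : int) (a : R) : 0 <= k -> 0 < j <= i%:Z ->
  al1 <= a -> a + 1 <= al2 -> decay_bound k j (a + 1) ->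
  forall t, 2 * t0 <= t -> F (j - 1) a t <= late_const k * (t `^ (a - al2 - g) * X).
Proof.
move=> k_ge0 j_i al1a a1al2 bound t t2t0.
have t0u : t0 <= t / 2 by rewrite ler_pdivlMr //; lra.
have u_gt0 := lt_le_trans t0_gt0 t0u.
have u_pow : (t / 2) `^ (a - al2 - g) <= P * t `^ (a - al2 - g).
  apply: powR_le_of_le_double => //; [lra | lra |].
  by move: g_ge0 => ?; apply/andP; split; lra.
apply/ler_addgt0Pr => eps eps_gt0.
have [s /andP[us st] Fs] :=
  morawetz_exists_small k_ge0 j_i al1a a1al2 bound t0u (divr_gt0 eps_gt0 C_gt0).
have := @energy_transport (C * (k + 1) * P) (eps / C) (j - 1) a s t.
rewrite [C * (eps / C)]mulrC divfK ?gt_eqF //; apply => //.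
- exact: int_between_predS.
- by apply/andP; split; lra.
- exact: le_trans us.
- lra.
- lra.
apply: le_trans Fs _; rewrite lerD2r -!mulrA ler_wpM2l ?(ltW C_gt0) //.
by rewrite ler_wpM2l ?mulrA ?ler_wpM2r //; lra.
Qed.

Lemma decay_lower_weight (k : R) (j : int) (a : R) : 0 <= k -> 0 < j <= i%:Z ->
  al1 <= a -> a + 1 <= al2 -> decay_bound k j (a + 1) ->
  decay_bound (step_const k) (j - 1) a.
Proof.
move=> k_ge0 j_i al1a a1al2 bound t t0t.
have TX_ge0 : 0 <= t `^ (a - al2 - g) * X by rewrite mulr_ge0 ?powR_ge0.
have [t_le | t_gt] := lerP t (2 * t0).
- apply: le_trans (decay_early k_ge0 j_i al1a a1al2 bound t0t t_le) _.
  by rewrite ler_wpM2r // lerDl late_const_ge0.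
- apply: le_trans (decay_late k_ge0 j_i al1a a1al2 bound (ltW t_gt)) _.
  by rewrite ler_wpM2r // lerDr early_const_ge0.
Qed.

Lemma decay_interp (k : R) (j : int) (b1 b2 a : R) : -1 <= j <= i%:Z ->
  al1 <= b1 -> b1 <= a -> a <= b2 -> b2 <= al2 -> b1 < b2 ->
  decay_bound k j b1 -> decay_bound k j b2 -> decay_bound (C * k) j a.
Proof.
move=> j_i al1b1 b1a ab2 b2al2 b12 bound1 bound2 t t0t.
have b12_neq0 : b2 - b1 != 0 by rewrite subr_eq0 gt_eqF.
apply: le_trans (F_interp j_i al1b1 b1a ab2 b2al2 b12 t0t) _.
rewrite -mulrA ler_wpM2l ?(ltW C_gt0) //.
rewrite (_ : a - al2 - g = (b1 - al2 - g) * ((b2 - a) / (b2 - b1))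
                          + (b2 - al2 - g) * ((a - b1) / (b2 - b1))); last by field.
rewrite (mulrC (t `^ _)) [k * _]mulrA; apply: powR_interp_le.
- exact: lt_le_trans t0t.
- by rewrite divr_ge0 ?subr_ge0 // ltW.
- by rewrite divr_ge0 ?subr_ge0 // ltW.
- by field.
- rewrite F_ge0 //=; last by apply/andP; split; lra.
  by have := bound1 t t0t; rewrite (mulrC (t `^ _)) [k * _]mulrA.
- rewrite F_ge0 //=; last by apply/andP; split; lra.
  by have := bound2 t t0t; rewrite (mulrC (t `^ _)) [k * _]mulrA.
Qed.

Lemma decay_near_top (k : R) (j : int) (a : R) : 0 <= k -> 0 < j <= i%:Z ->
  al2 - 1 <= a <= al2 -> decay_bound k j al2 -> decay_bound (interp_const k) (j - 1) a.
Proof.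
move=> k_ge0 j_i /andP[a_ge a_le] bound.
have j_i' : 0 <= j <= i%:Z by case/andP: j_i => /ltW -> ->.
have bound_low : decay_bound (step_const k + C * k) (j - 1) (al2 - 1).
  apply: decay_bound_le (decay_lower_weight k_ge0 j_i al12 _ _).
  - by rewrite lerDl mulr_ge0 // ltW.
  - by rewrite subrK.
  - by rewrite subrK.
have bound_top : decay_bound (step_const k + C * k) (j - 1) al2.
  apply: decay_bound_le (decay_lower_level j_i' al2_range bound).
  by rewrite lerDr step_const_ge0.
apply: decay_interp (int_between_pred j_i') al12 a_ge a_le (lexx al2) _
  bound_low bound_top.
by rewrite gtrBl.
Qed.

Lemma decay (j : nat) : (j <= i)%N ->
  forall a, Num.max al1 (al2 - j%:R) <= a -> a <= al2 ->
  decay_bound (decay_const j) (i%:Z - j%:Z) a.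
Proof.
elim: j => [_ a | j IH j_lt a].
  rewrite ge_max subr0 => /andP[_ al2a] aal2.
  have -> : a = al2 by apply/le_anti; rewrite aal2 al2a.
  by rewrite subr0; exact: decay_top.
rewrite ge_max -natr1 => /andP[al1a a_j] aal2.
have j_le := ltnW j_lt; have j_i := int_subn_between j_lt.
have k_ge0 := decay_const_ge0 j; have j_ge0 := ler0n R j.
have step_ge0 := step_const_ge0 k_ge0; have interp_ge0 := interp_const_ge0 k_ge0.
have -> : i%:Z - j.+1%:Z = i%:Z - j%:Z - 1 by rewrite -addn1 PoszD opprD addrA.
have [a_low | a_high] := lerP a (al2 - 1).
  have a1_j : Num.max al1 (al2 - j%:R) <= a + 1.
    by rewrite ge_max; apply/andP; split; lra.
  have a1_al2 : a + 1 <= al2 by lra.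
  apply: decay_bound_le (decay_lower_weight k_ge0 j_i al1a a1_al2
    (IH j_le _ a1_j a1_al2)) => /=; lra.
have al2_j : Num.max al1 (al2 - j%:R) <= al2.
  by rewrite ge_max; apply/andP; split; move: al12; lra.
have a_top : al2 - 1 <= a <= al2 by apply/andP; split; lra.
apply: decay_bound_le (decay_near_top k_ge0 j_i a_top (IH j_le al2 al2_j (lexx al2))).
by rewrite /=; lra.
Qed.

End Decay.

Theorem lemma5p2 (R : realType) (t0 al1 al2 : R) (i : nat) (g C : R) :
  0 < t0 -> (0 < i)%N -> al1 <= al2 - 1 -> al2 - al1 <= i%:R ->
  0 <= g -> 0 < C ->
  exists C' : R, forall (D : R) (F : int -> R -> R -> R),
    0 <= D ->
    (* F maps {-1..i} x [al1-1, al2] x [t0, oo) into [0, oo) *)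
    (forall (j : int) (a t : R), -1 <= j <= i%:Z -> al1 - 1 <= a <= al2 ->
       t0 <= t -> 0 <= F j a t) ->
    (* Lebesgue measurability in t *)
    (forall (j : int) (a : R), -1 <= j <= i%:Z -> al1 - 1 <= a <= al2 ->
       measurable_fun `[t0, +oo[ (F j a)) ->
    (* (1) monotonicity *)
    (forall (j1 j2 : int) (b t : R), -1 <= j1 -> j1 <= j2 -> j2 <= i%:Z ->
       al1 <= b <= al2 -> t0 <= t -> F j1 b t <= C * F j2 b t) ->
    (forall (j : int) (b1 b2 t : R), -1 <= j <= i%:Z ->
       al1 <= b1 -> b1 <= b2 -> b2 <= al2 -> t0 <= t ->
       F j b1 t <= C * F j b2 t) ->
    (* (2) interpolation *)
    (forall (j : int) (a b1 b2 t : R), -1 <= j <= i%:Z ->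
       al1 <= b1 -> b1 <= a -> a <= b2 -> b2 <= al2 -> b1 < b2 -> t0 <= t ->
       F j a t <= C * (F j b1 t `^ ((b2 - a) / (b2 - b1))
                       * F j b2 t `^ ((a - b1) / (b2 - b1)))) ->
    (* (3) energy and Morawetz estimate *)
    (forall (j : int) (a t1 t2 : R), 0 <= j <= i%:Z -> al1 <= a <= al2 ->
       t0 <= t1 -> t1 <= t2 ->
       ((F j a t2)%:E
        + \int[lebesgue_measure]_(t in `[t1, t2]) (F (j - 1) (a - 1) t)%:E
        <= (C * (F j a t1 + D * t1 `^ (a - al2 - g)))%:E)%E) ->
    (* (4) initial decay rate *)
    (0 < g -> forall t : R, t0 <= t ->
       F i%:Z al2 t <= C * (t `^ (- g) * (F i%:Z al2 t0 + D))) ->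
    (* conclusion *)
    forall (j : nat), (j <= i)%N ->
    forall a : R, Num.max al1 (al2 - j%:R) <= a -> a <= al2 ->
    forall t : R, t0 <= t ->
      F (i%:Z - j%:Z) a t <= C' * (t `^ (a - al2 - g) * (F i%:Z al2 t0 + D)).
Proof.
move=> t0_gt0 _ al12 _ g_ge0 C_gt0.
exists (decay_const t0 al1 al2 g C i) => D F D_ge0 F_ge0 F_meas F_level
  F_weight F_interp F_energy F_decay j j_i a a_ge a_le t t0t.
have bound := decay t0_gt0 C_gt0 al12 g_ge0 D_ge0 F_ge0 F_meas F_level
  F_weight F_interp F_energy F_decay j_i a_ge a_le.
by apply: (decay_bound_le al12 D_ge0 F_ge0
  (decay_const_le al1 al2 g t0_gt0 C_gt0 j_i) bound).
Qed.
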